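(* If $M\preceq N$ are two non-quasianalytic weight sequences, then $L(M)\preceq L(N)$ and $\underline L(M)\preceq\underline L(N)$.
   Context: A weight sequence is $M=(M_k)_{k\ge0}$ with $M_k=\mu_0\cdots\mu_k$, $1=\mu_0\le\mu_1\le\cdots$, $\mu_k\to\infty$; non-quasianalytic if $\sum1/\mu_k<\infty$. For positive sequences, $M\preceq N$ means $\sup_{k\ge1}(M_k/N_k)^{1/k}<\infty$. $L(M)_0=1$, $L(M)_k=\min_{0\le j<k}\big(k/\sum_{\ell\ge k}\mu_\ell^{-1}\big)^{k-j}M_j$ for $k\ge1$. For a positive sequence $P$ with $P_k^{1/k}\to\infty$, $\omega_P(t)=\sup_k\log(t^kP_0/P_k)$ and its log-convex minorant is $\underline P_k=P_0\sup_{t\ge0}t^ke^{-\omega_P(t)}$; $\underline L(M)$ is the log-convex minorant of $L(M)$. *)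

From Stdlib Require Import Reals.
From Coquelicot Require Import Coquelicot.
Open Scope R_scope.

(* A weight sequence is given by its quotients mu; M_k = mu_0 * ... * mu_k. *)
Definition Mseq (mu : nat -> R) (k : nat) : R := prod_f_R0 mu k.

Definition weight_seq (mu : nat -> R) : Prop :=
  mu 0%nat = 1 /\ (forall k, mu k <= mu (S k)) /\ is_lim_seq mu p_infty.

Definition nonquasianalytic (mu : nat -> R) : Prop :=
  ex_series (fun k => / mu k).

Definition preceq (P Q : nat -> R) : Prop :=
  exists C : R, forall k : nat, (1 <= k)%nat ->
    Rpower (P k / Q k) (/ INR k) <= C.

Definition tail (mu : nat -> R) (k : nat) : R :=
  Series (fun l => / mu (k + l)%nat).

Fixpoint finmin (f : nat -> R) (n : nat) : R :=
  match n with
  | O => f O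
  | S m => Rmin (finmin f m) (f (S m))
  end.

Definition Lseq (mu : nat -> R) (k : nat) : R :=
  match k with
  | O => 1
  | S n => finmin (fun j => (INR k / tail mu k) ^ (k - j) * Mseq mu j) n
  end.

Definition omega (P : nat -> R) (t : R) : Rbar :=
  Sup_seq (fun k => let x := t ^ k * P 0%nat / P k in
                    if Rlt_dec 0 x then Finite (ln x) else m_infty).

Definition expneg (w : Rbar) : R :=
  match w with
  | Finite x => exp (- x)
  | _ => 0
  end.

Definition lc_minorant (P : nat -> R) (k : nat) : R :=
  P 0%nat * real (Lub_Rbar (fun x => exists t, 0 <= t /\ x = t ^ k * expneg (omega P t))).

From Stdlib Require Import Reals Lra Lia.
From Coquelicot Require Import Coquelicot.
Open Scope R_scope.

(* Write [M_l <= C^l N_l] and let the minimum defining [L(N)_k] be attained at [j < k],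
   [r = k - j].  Since [nu] increases, [1/nu_(j+m) <= (N_j/N_(j+m))^(1/m)
   <= C Phi (M_j/M_(j+m))^(1/m)] for [m >= r], where [Phi^r = C^j N_j/M_j].  Summing over
   [m >= r], Carleman's inequality for the sequence [1/mu_(j+i)] with its first [r] terms
   replaced by their geometric mean [g = (M_j/M_k)^(1/r)] bounds the tail
   [sum_(l>=k) 1/nu_l] by [2 e C Phi (r g + sum_(l>=k) 1/mu_l)].  Together with
   [L(M)_k <= (k / sum_(l>=k) 1/mu_l)^r M_j] and [L(M)_k <= k M_k] this yields
   [L(M)_k <= (24 C)^k L(N)_k].  For the minorants, [P_k <= A^k Q_k] gives
   [omega_Q(t) <= omega_P(A t)] and hence [underline P_k <= A^k underline Q_k]. *)

(** * Carleman's inequality *)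

Fixpoint prod1 (c : nat -> R) (n : nat) : R :=
  match n with O => 1 | S m => prod1 c m * c (S m) end.

Fixpoint sum1 (c : nat -> R) (n : nat) : R :=
  match n with O => 0 | S m => sum1 c m + c (S m) end.

Lemma prod1_pos c n : (forall i, (1 <= i)%nat -> 0 < c i) -> 0 < prod1 c n.
Proof.
  intros Hc; induction n as [|n IH]; simpl; [lra|].
  apply Rmult_lt_0_compat; [exact IH | apply Hc; lia].
Qed.

Lemma sum1_nonneg c n : (forall i, (1 <= i)%nat -> 0 <= c i) -> 0 <= sum1 c n.
Proof.
  intros Hc; induction n as [|n IH]; simpl; [lra|].
  assert (0 <= c (S n)) by (apply Hc; lia); lra.
Qed.

Lemma sum1_pos c n : (forall i, (1 <= i)%nat -> 0 < c i) -> (1 <= n)%nat -> 0 < sum1 c n.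
Proof.
  intros Hc Hn; destruct n as [|n]; [lia|]; simpl.
  assert (0 <= sum1 c n) by (apply sum1_nonneg; intros i Hi; left; apply Hc, Hi).
  assert (0 < c (S n)) by (apply Hc; lia); lra.
Qed.

Lemma prod1_ext f g n : (forall i, (1 <= i <= n)%nat -> f i = g i) -> prod1 f n = prod1 g n.
Proof.
  induction n as [|n IH]; intros H; simpl; [reflexivity|].
  rewrite IH by (intros; apply H; lia); rewrite H by lia; reflexivity.
Qed.

Lemma sum1_ext f g n : (forall i, (1 <= i <= n)%nat -> f i = g i) -> sum1 f n = sum1 g n.
Proof.
  induction n as [|n IH]; intros H; simpl; [reflexivity|].
  rewrite IH by (intros; apply H; lia); rewrite H by lia; reflexivity.
Qed.

Lemma sum1_le f g n : (forall i, (1 <= i <= n)%nat -> f i <= g i) -> sum1 f n <= sum1 g n.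
Proof.
  induction n as [|n IH]; intros H; simpl; [lra|].
  assert (IHn := IH (fun i Hi => H i ltac:(lia))); assert (f (S n) <= g (S n)) by (apply H; lia).
  lra.
Qed.

Lemma prod1_mul f g n : prod1 (fun i => f i * g i) n = prod1 f n * prod1 g n.
Proof. induction n as [|n IH]; simpl; [ring|]. rewrite IH; ring. Qed.

Lemma prod1_inv f n : prod1 (fun i => / f i) n = / prod1 f n.
Proof. induction n as [|n IH]; simpl; [field|]. rewrite IH, Rinv_mult; reflexivity. Qed.

Lemma prod1_const a n : prod1 (fun _ => a) n = a ^ n.
Proof. induction n as [|n IH]; simpl; [reflexivity|]. rewrite IH; ring. Qed.

Lemma sum1_const a n : sum1 (fun _ => a) n = INR n * a.
Proof. induction n as [|n IH]; simpl sum1; [simpl; ring|]. rewrite IH, S_INR; ring. Qed.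

Lemma sum1_scal a f n : sum1 (fun i => a * f i) n = a * sum1 f n.
Proof. induction n as [|n IH]; simpl; [ring|]. rewrite IH; ring. Qed.

Lemma prod1_le_pow c a n : (forall i, (1 <= i <= n)%nat -> 0 <= c i <= a) -> prod1 c n <= a ^ n.
Proof.
  induction n as [|n IH]; intros H; simpl; [lra|].
  assert (0 <= prod1 c n).
  { clear IH; induction n as [|n IHn]; simpl; [lra|].
    apply Rmult_le_pos; [apply IHn; intros; apply H; lia | apply H; lia]. }
  assert (Hn := IH (fun i Hi => H i ltac:(lia))); assert (HS := H (S n) ltac:(lia)).
  rewrite Rmult_comm; apply Rmult_le_compat; lra.
Qed.

Lemma prod1_INR n : prod1 INR n = INR (Factorial.fact n).
Proof.
  induction n as [|n IH]; [reflexivity|].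
  change (prod1 INR n * INR (S n) = INR (S n * Factorial.fact n)).
  rewrite mult_INR, IH; ring.
Qed.

Lemma pow_le_reg x y n : 0 <= x -> 0 <= y -> (1 <= n)%nat -> x ^ n <= y ^ n -> x <= y.
Proof.
  intros Hx Hy Hn H; destruct (Rle_lt_dec x y) as [|Hyx]; [assumption|].
  destruct n as [|m]; [lia|]; simpl in H.
  assert (y ^ m <= x ^ m) by (apply pow_incr; lra).
  assert (0 < x ^ m) by (apply pow_lt; lra).
  nra.
Qed.

(* Each factor satisfies [y <= B exp (y / B - 1)]; taking [B] the mean gives AM-GM. *)
Lemma prod1_le_pow_mul_exp y B n : (forall i, (1 <= i)%nat -> 0 < y i) -> 0 < B ->
  prod1 y n <= B ^ n * exp (sum1 y n / B - INR n).
Proof.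
  intros Hy HB; induction n as [|n IH].
  - simpl; replace (0 / B - 0) with 0 by (field; lra); rewrite exp_0; lra.
  - assert (Hlast : y (S n) <= B * exp (y (S n) / B - 1)).
    { assert (H := exp_ineq1_le (y (S n) / B - 1)).
      replace (y (S n)) with (B * (1 + (y (S n) / B - 1))) at 1 by (field; lra).
      apply Rmult_le_compat_l; lra. }
    replace (sum1 y (S n) / B - INR (S n)) with ((sum1 y n / B - INR n) + (y (S n) / B - 1))
      by (simpl sum1; rewrite S_INR; field; lra).
    rewrite exp_plus; simpl.
    assert (0 < prod1 y n) by (apply prod1_pos; exact Hy).
    assert (0 < y (S n)) by (apply Hy; lia).
    replace (B * B ^ n * (exp (sum1 y n / B - INR n) * exp (y (S n) / B - 1)))
      with (B ^ n * exp (sum1 y n / B - INR n) * (B * exp (y (S n) / B - 1))) by ring.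
    apply Rmult_le_compat; lra.
Qed.

Lemma prod1_le_pow_mean y n : (forall i, (1 <= i)%nat -> 0 < y i) -> (1 <= n)%nat ->
  prod1 y n <= (sum1 y n / INR n) ^ n.
Proof.
  intros Hy Hn.
  assert (0 < sum1 y n) by (apply sum1_pos; assumption).
  assert (0 < INR n) by (apply lt_0_INR; lia).
  eapply Rle_trans; [apply (prod1_le_pow_mul_exp y (sum1 y n / INR n) n Hy)|].
  { apply Rdiv_lt_0_compat; assumption. }
  replace (sum1 y n / (sum1 y n / INR n) - INR n) with 0 by (field; lra).
  rewrite exp_0; lra.
Qed.

Lemma exp_INR n : exp (INR n) = exp 1 ^ n.
Proof.
  induction n as [|n IH]; [simpl; apply exp_0|].
  rewrite S_INR, exp_plus, IH; simpl; ring.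
Qed.

Lemma pow_le_exp_pow_mul_fact n : INR n ^ n <= exp 1 ^ n * INR (Factorial.fact n).
Proof.
  assert (Hfact := INR_fact_lt_0 n).
  assert (Hterm : INR n ^ n / INR (Factorial.fact n) <= exp (INR n)).
  { eapply Rle_trans; [|apply (exp_ge_taylor (INR n) n (pos_INR n))].
    destruct n as [|n]; [right; reflexivity|]; rewrite tech5.
    assert (0 <= sum_f_R0 (fun k => INR (S n) ^ k / INR (Factorial.fact k)) n).
    { apply cond_pos_sum; intros k.
      apply Rdiv_le_0_compat; [apply pow_le, pos_INR | apply INR_fact_lt_0]. }
    lra. }
  rewrite exp_INR in Hterm.
  apply (Rmult_le_compat_r (INR (Factorial.fact n))) in Hterm; [|lra].
  unfold Rdiv in Hterm; rewrite Rmult_assoc, Rinv_l in Hterm by lra; lra.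
Qed.

Lemma prod1_le_carleman_term c n : (forall i, (1 <= i)%nat -> 0 < c i) -> (1 <= n)%nat ->
  prod1 c n <= (exp 1 * sum1 (fun i => INR i * c i) n / INR n ^ 2) ^ n.
Proof.
  intros Hc Hn.
  set (A := sum1 (fun i => INR i * c i) n).
  assert (HnR : 0 < INR n) by (apply lt_0_INR; lia).
  assert (Hamgm : INR (Factorial.fact n) * prod1 c n <= (A / INR n) ^ n).
  { rewrite <- prod1_INR, <- prod1_mul; apply prod1_le_pow_mean; [|exact Hn].
    intros i Hi; apply Rmult_lt_0_compat; [apply lt_0_INR; lia | apply Hc, Hi]. }
  assert (Hfact := pow_le_exp_pow_mul_fact n).
  assert (0 < prod1 c n) by (apply prod1_pos, Hc).
  assert (0 < exp 1 ^ n) by (apply pow_lt, exp_pos).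
  apply (Rmult_le_reg_r (INR n ^ n)); [apply pow_lt; lra|].
  replace ((exp 1 * A / INR n ^ 2) ^ n * INR n ^ n) with (exp 1 ^ n * (A / INR n) ^ n)
    by (rewrite <- !Rpow_mult_distr; f_equal; field; lra).
  apply Rle_trans with (prod1 c n * (exp 1 ^ n * INR (Factorial.fact n))).
  - apply Rmult_le_compat_l; lra.
  - replace (prod1 c n * (exp 1 ^ n * INR (Factorial.fact n)))
      with (exp 1 ^ n * (INR (Factorial.fact n) * prod1 c n)) by ring.
    apply Rmult_le_compat_l; lra.
Qed.

(* Telescoping: [A_m/m^2 + A_m/m <= A_(m-1)/(m-1) + 2 c_m] with [A_m = sum_(i<=m) i c_i]
   (at [m = 1] the quotient [A_0/0] is [0/0 = 0]). *)
Lemma carleman_partial_sums c N : (forall i, (1 <= i)%nat -> 0 <= c i) ->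
  sum1 (fun m => sum1 (fun i => INR i * c i) m / INR m ^ 2) N
  + sum1 (fun i => INR i * c i) N / INR N <= 2 * sum1 c N.
Proof.
  intros Hc; induction N as [|N IH].
  - simpl; unfold Rdiv; rewrite Rmult_0_l; lra.
  - cbn [sum1]; set (A := sum1 (fun i => INR i * c i) N) in *.
    assert (HA : 0 <= A).
    { apply sum1_nonneg; intros i Hi; apply Rmult_le_pos; [apply pos_INR | apply Hc, Hi]. }
    assert (HcS : 0 <= c (S N)) by (apply Hc; lia).
    assert (Hstep : (A + INR (S N) * c (S N)) / INR (S N) ^ 2
                    + (A + INR (S N) * c (S N)) / INR (S N) <= A / INR N + 2 * c (S N)).
    { destruct N as [|N].
      - unfold A; simpl; unfold Rdiv; rewrite Rinv_0; lra.
      - rewrite (S_INR (S N)); set (x := INR (S N)) in *.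
        assert (Hx : 1 <= x) by (unfold x; rewrite S_INR; assert (H0 := pos_INR N); lra).
        assert (0 <= A / (x * (x + 1) ^ 2)) by (apply Rdiv_le_0_compat; [lra | nra]).
        assert (0 <= c (S (S N)) * (x / (x + 1))) by (apply Rmult_le_pos; [lra | apply Rdiv_le_0_compat; lra]).
        replace ((A + (x + 1) * c (S (S N))) / (x + 1) ^ 2 + (A + (x + 1) * c (S (S N))) / (x + 1))
          with (A / x + 2 * c (S (S N)) - A / (x * (x + 1) ^ 2) - c (S (S N)) * (x / (x + 1)))
          by (field; lra).
        lra. }
    lra.
Qed.

Lemma carleman c x N : (forall i, (1 <= i)%nat -> 0 < c i) ->
  (forall m, (1 <= m <= N)%nat -> 0 <= x m /\ x m ^ m <= prod1 c m) ->
  sum1 x N <= 2 * exp 1 * sum1 c N.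
Proof.
  intros Hc Hx; destruct N as [|N]; [simpl; lra|].
  set (A := fun m => sum1 (fun i => INR i * c i) m).
  assert (HA : forall m, 0 <= A m).
  { intros m; apply sum1_nonneg; intros i Hi.
    apply Rmult_le_pos; [apply pos_INR | left; apply Hc, Hi]. }
  assert (Hpt : forall m, (1 <= m <= S N)%nat -> x m <= exp 1 * (A m / INR m ^ 2)).
  { intros m Hm; destruct (Hx m Hm) as [Hx0 Hxm].
    assert (0 < INR m ^ 2) by (apply pow_lt, lt_0_INR; lia).
    apply (pow_le_reg _ _ m); [exact Hx0 | | lia |].
    - apply Rmult_le_pos; [left; apply exp_pos | apply Rdiv_le_0_compat; [apply HA | lra]].
    - eapply Rle_trans; [exact Hxm|].
      replace (exp 1 * (A m / INR m ^ 2)) with (exp 1 * A m / INR m ^ 2) by (unfold Rdiv; ring).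
      apply prod1_le_carleman_term; [exact Hc | lia]. }
  eapply Rle_trans; [apply (sum1_le _ _ _ Hpt)|]; rewrite sum1_scal.
  assert (Hsum := carleman_partial_sums c (S N) (fun i Hi => Rlt_le _ _ (Hc i Hi))).
  assert (0 <= A (S N) / INR (S N)) by (apply Rdiv_le_0_compat; [apply HA | apply lt_0_INR; lia]).
  assert (He := exp_pos 1); unfold A in *.
  rewrite (Rmult_comm 2), Rmult_assoc; apply Rmult_le_compat_l; lra.
Qed.

Lemma root_pow x r : 0 < x -> (1 <= r)%nat -> Rpower x (/ INR r) ^ r = x.
Proof.
  intros Hx Hr; assert (0 < INR r) by (apply lt_0_INR; lia).
  rewrite <- Rpower_pow by apply exp_pos.
  rewrite Rpower_mult, Rinv_l by lra; apply Rpower_1, Hx.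
Qed.

Lemma preceq_of_le_pow P Q D : 1 <= D -> (forall k, (1 <= k)%nat -> 0 <= Q k) ->
  (forall k, (1 <= k)%nat -> P k <= D ^ k * Q k) -> preceq P Q.
Proof.
  intros HD HQ HPQ; exists D; intros k Hk.
  assert (HkR : 0 < INR k) by (apply lt_0_INR; lia).
  destruct (Rlt_dec 0 (P k / Q k)) as [Hpos|Hnpos].
  - assert (HQk : 0 < Q k).
    { destruct (HQ k Hk) as [|HQ0]; [assumption|].
      rewrite <- HQ0 in Hpos; unfold Rdiv in Hpos; rewrite Rinv_0, Rmult_0_r in Hpos; lra. }
    eapply Rle_trans.
    + apply Rle_Rpower_l; [left; apply Rinv_0_lt_compat, HkR|].
      split; [exact Hpos | apply Rle_div_l; [exact HQk | apply HPQ, Hk]].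
    + rewrite <- Rpower_pow, Rpower_mult, Rinv_r, Rpower_1 by lra; lra.
  - (* a nonpositive ratio (e.g. [Q k = 0], as [x / 0 = 0]) has [ln] equal to [0] *)
    unfold Rpower, ln; destruct (Rlt_dec 0 (P k / Q k)); [contradiction|].
    rewrite Rmult_0_r, exp_0; exact HD.
Qed.

Lemma le_pow_of_preceq P Q : (forall k, 0 < P k) -> (forall k, 0 < Q k) ->
  P 0%nat <= Q 0%nat -> preceq P Q -> exists C, 1 <= C /\ forall k, P k <= C ^ k * Q k.
Proof.
  intros HP HQ HPQ0 [C0 HC0]; exists (Rmax C0 1); split; [apply Rmax_r|].
  intros [|k]; [simpl; lra|].
  assert (Hratio : 0 < P (S k) / Q (S k)) by (apply Rdiv_lt_0_compat; auto).
  apply (proj1 (Rle_div_l _ _ _ (HQ (S k)))).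
  rewrite <- (root_pow _ (S k) Hratio) by lia.
  apply pow_incr; split; [left; apply exp_pos|].
  eapply Rle_trans; [apply HC0; lia | apply Rmax_l].
Qed.

(** * Weight sequences and [L(M)] *)

Lemma sum_n_le_Series a N : (forall n, 0 <= a n) -> ex_series a -> sum_n a N <= Series a.
Proof.
  intros Ha Hex; apply (is_lim_seq_incr_compare (sum_n a)); [apply Series_correct, Hex|].
  intros n; rewrite sum_Sn; specialize (Ha (S n)); unfold plus; simpl; lra.
Qed.

Lemma Series_le_of_sum_n a B : ex_series a -> (forall N, sum_n a N <= B) -> Series a <= B.
Proof.
  intros Hex HB.
  exact (is_lim_seq_le (sum_n a) (fun _ => B) (Series a) B HB (Series_correct _ Hex)
           (is_lim_seq_const B)).
Qed.

Lemma finmin_le f n i : (i <= n)%nat -> finmin f n <= f i.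
Proof.
  induction n as [|n IH]; intros Hi; simpl.
  - replace i with 0%nat by lia; lra.
  - destruct (Nat.eq_dec i (S n)) as [->|Hne]; [apply Rmin_r|].
    eapply Rle_trans; [apply Rmin_l | apply IH; lia].
Qed.

Lemma finmin_attained f n : exists i, (i <= n)%nat /\ finmin f n = f i.
Proof.
  induction n as [|n [i [Hi E]]]; simpl; [exists 0%nat; split; auto|].
  unfold Rmin; destruct (Rle_dec (finmin f n) (f (S n))).
  - exists i; split; [lia | exact E].
  - exists (S n); split; auto.
Qed.

Lemma Lseq_le mu n i : (i <= n)%nat ->
  Lseq mu (S n) <= (INR (S n) / tail mu (S n)) ^ (S n - i) * Mseq mu i.
Proof. apply (finmin_le (fun j => _)). Qed.

Lemma Lseq_attained mu n : exists i, (i <= n)%nat /\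
  Lseq mu (S n) = (INR (S n) / tail mu (S n)) ^ (S n - i) * Mseq mu i.
Proof. apply (finmin_attained (fun j => _)). Qed.

Lemma Mseq_add mu j n : Mseq mu (j + n) = Mseq mu j * prod1 (fun i => mu (j + i)%nat) n.
Proof.
  induction n as [|n IH]; [rewrite Nat.add_0_r; simpl; ring|].
  rewrite Nat.add_succ_r; change (Mseq mu (S (j + n))) with (Mseq mu (j + n) * mu (S (j + n))).
  rewrite IH; cbn [prod1]; rewrite Nat.add_succ_r; ring.
Qed.

Section WeightSequence.

Variable mu : nat -> R.
Hypothesis Hmu : weight_seq mu.

Lemma weight_seq_ge1 k : 1 <= mu k.
Proof.
  destruct Hmu as [H0 [Hincr _]]; induction k as [|k IH]; [lra|].
  specialize (Hincr k); lra.
Qed.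

Lemma weight_seq_pos k : 0 < mu k.
Proof. assert (H := weight_seq_ge1 k); lra. Qed.

Lemma weight_seq_mono a b : (a <= b)%nat -> mu a <= mu b.
Proof.
  intros Hab; destruct Hmu as [_ [Hincr _]]; induction Hab as [|b _ IH]; [lra|].
  specialize (Hincr b); lra.
Qed.

Lemma Mseq_0 : Mseq mu 0 = 1.
Proof. apply Hmu. Qed.

Lemma Mseq_pos k : 0 < Mseq mu k.
Proof.
  induction k as [|k IH]; [rewrite Mseq_0; lra|].
  apply Rmult_lt_0_compat; [exact IH | apply weight_seq_pos].
Qed.

Lemma Mseq_ratio j n : Mseq mu j / Mseq mu (j + n) = prod1 (fun i => / mu (j + i)%nat) n.
Proof.
  assert (0 < prod1 (fun i => mu (j + i)%nat) n)
    by (apply prod1_pos; intros; apply weight_seq_pos).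
  assert (0 < Mseq mu j) by apply Mseq_pos.
  rewrite prod1_inv, Mseq_add; field; lra.
Qed.

Lemma inv_pow_le_Mseq_ratio j n : (/ mu (j + n)%nat) ^ n <= Mseq mu j / Mseq mu (j + n).
Proof.
  assert (Hprod : prod1 (fun i => mu (j + i)%nat) n <= mu (j + n)%nat ^ n).
  { apply prod1_le_pow; intros i Hi; split; [left; apply weight_seq_pos|].
    apply weight_seq_mono; lia. }
  assert (0 < prod1 (fun i => mu (j + i)%nat) n)
    by (apply prod1_pos; intros; apply weight_seq_pos).
  rewrite Mseq_ratio, prod1_inv, pow_inv.
  apply Rinv_le_contravar; assumption.
Qed.

Hypothesis Hmu_nq : nonquasianalytic mu.

Lemma ex_series_tail k : ex_series (fun l => / mu (k + l)%nat).
Proof. apply (ex_series_incr_n (fun l => / mu l) k), Hmu_nq. Qed.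

Lemma sum_n_le_tail k P : sum_n (fun l => / mu (k + l)%nat) P <= tail mu k.
Proof.
  apply sum_n_le_Series; [|apply ex_series_tail].
  intros n; left; apply Rinv_0_lt_compat, weight_seq_pos.
Qed.

Lemma inv_le_tail k : / mu k <= tail mu k.
Proof. assert (H := sum_n_le_tail k 0); rewrite sum_O, Nat.add_0_r in H; exact H. Qed.

Lemma tail_pos k : 0 < tail mu k.
Proof.
  assert (0 < / mu k) by (apply Rinv_0_lt_compat, weight_seq_pos).
  assert (Htail := inv_le_tail k); lra.
Qed.

Lemma Lseq_pos k : 0 < Lseq mu k.
Proof.
  destruct k as [|n]; [simpl; lra|].
  destruct (Lseq_attained mu n) as [i [_ ->]].
  apply Rmult_lt_0_compat; [|apply Mseq_pos].
  apply pow_lt, Rdiv_lt_0_compat; [apply lt_0_INR; lia | apply tail_pos].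
Qed.

(* Take [j = k - 1] in the minimum and use [1/mu_k <= tail mu k]. *)
Lemma Lseq_le_mul_Mseq n : Lseq mu (S n) <= INR (S n) * Mseq mu (S n).
Proof.
  eapply Rle_trans; [apply (Lseq_le mu n n); lia|].
  replace (S n - n)%nat with 1%nat by lia; rewrite pow_1.
  change (Mseq mu (S n)) with (Mseq mu n * mu (S n)).
  assert (Hmu_S := weight_seq_pos (S n)); assert (Htail := tail_pos (S n)).
  assert (HM := Mseq_pos n).
  assert (INR (S n) / tail mu (S n) <= INR (S n) * mu (S n)).
  { unfold Rdiv; apply Rmult_le_compat_l; [apply pos_INR|].
    rewrite <- (Rinv_inv (mu (S n))); apply Rinv_le_contravar; [|apply inv_le_tail].
    apply Rinv_0_lt_compat; lra. }
  replace (INR (S n) * (Mseq mu n * mu (S n))) with (INR (S n) * mu (S n) * Mseq mu n) by ring.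
  apply Rmult_le_compat_r; lra.
Qed.

End WeightSequence.

(** * Comparing [L(M)] with [L(N)] *)

Lemma INR_le_pow2 k : INR k <= 2 ^ k.
Proof.
  induction k as [|k IH]; [simpl; lra|].
  rewrite S_INR; simpl; assert (1 <= 2 ^ k) by (apply pow_R1_Rle; lra); lra.
Qed.

(* Bound [r g + sigma] by twice the larger summand and use the first bound when [sigma]
   dominates, the second one otherwise. *)
Lemma mul_pow_add_le_of_two_bounds L sigma g Mj Mk (k r : nat) : (r <= k)%nat -> (1 <= k)%nat ->
  0 <= L -> 0 < sigma -> 0 < g -> 0 < Mj -> 0 < Mk ->
  L <= (INR k / sigma) ^ r * Mj -> L <= INR k * Mk -> g ^ r = Mj / Mk ->
  L * (INR r * g + sigma) ^ r <= (2 * INR k) ^ r * INR k * Mj.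
Proof.
  intros Hrk Hk HL Hs Hg HMj HMk H1 H2 Hgr.
  assert (HkR : 1 <= INR k) by (apply (le_INR 1); exact Hk).
  assert (Hr_k : INR r <= INR k) by (apply le_INR, Hrk).
  assert (0 <= INR r) by apply pos_INR.
  assert (0 < (2 * INR k) ^ r) by (apply pow_lt; lra).
  destruct (Rle_dec (INR r * g) sigma) as [Hsig|Hsig].
  - assert (HW : (INR r * g + sigma) ^ r <= 2 ^ r * sigma ^ r)
      by (rewrite <- Rpow_mult_distr; apply pow_incr; nra).
    apply Rle_trans with ((INR k / sigma) ^ r * Mj * (2 ^ r * sigma ^ r)).
    { apply Rmult_le_compat; [lra | apply pow_le; nra | exact H1 | exact HW]. }
    replace ((INR k / sigma) ^ r * Mj * (2 ^ r * sigma ^ r)) with ((2 * INR k) ^ r * Mj)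
      by (unfold Rdiv; rewrite !Rpow_mult_distr, pow_inv; field; apply pow_nonzero; lra).
    replace ((2 * INR k) ^ r * INR k * Mj) with ((2 * INR k) ^ r * Mj * INR k) by ring.
    rewrite <- (Rmult_1_r ((2 * INR k) ^ r * Mj)) at 1; apply Rmult_le_compat_l; nra.
  - assert (HW : (INR r * g + sigma) ^ r <= 2 ^ r * INR r ^ r * (Mj / Mk))
      by (rewrite <- Hgr, <- !Rpow_mult_distr; apply pow_incr; nra).
    apply Rle_trans with (INR k * Mk * (2 ^ r * INR r ^ r * (Mj / Mk))).
    { apply Rmult_le_compat; [lra | apply pow_le; nra | exact H2 | exact HW]. }
    replace (INR k * Mk * (2 ^ r * INR r ^ r * (Mj / Mk))) with ((2 * INR r) ^ r * INR k * Mj)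
      by (rewrite Rpow_mult_distr; field; lra).
    apply Rmult_le_compat_r; [lra|]; apply Rmult_le_compat_r; [lra|].
    apply pow_incr; lra.
Qed.

Lemma pow_const_le C j r : 1 <= C -> (4 * exp 1 * C) ^ r * C ^ j * INR (j + r) <= (24 * C) ^ (j + r).
Proof.
  intros HC; assert (He := exp_le_3); assert (He0 := exp_pos 1).
  replace (24 * C) with (12 * C * 2) by ring; rewrite (Rpow_mult_distr (12 * C) 2), pow_add.
  apply Rmult_le_compat; [| apply pos_INR | | apply INR_le_pow2].
  - apply Rmult_le_pos; apply pow_le; nra.
  - rewrite Rmult_comm; apply Rmult_le_compat; try (apply pow_le; nra); apply pow_incr; nra.
Qed.

(* With [Phi ^ r = C ^ j f], the bound on [rho] gives [rho ^ r <= (2 e C) ^ r C ^ j f W ^ r]. *)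
Lemma le_of_mul_pow_bound L rho W Phi C f Mj (j r : nat) : (1 <= r)%nat -> 1 <= C ->
  0 <= L -> 0 < rho -> 0 < Phi -> 0 < f -> 0 < Mj -> 0 < W ->
  Phi ^ r = C ^ j * f -> rho <= 2 * exp 1 * C * Phi * W ->
  L * W ^ r <= (2 * INR (j + r)) ^ r * INR (j + r) * Mj ->
  L <= (24 * C) ^ (j + r) * ((INR (j + r) / rho) ^ r * (f * Mj)).
Proof.
  intros Hr HC HL Hrho HPhi Hf HMj HW EPhi Hrho_le HLW.
  set (k := INR (j + r)) in *.
  assert (Hk : 1 <= k) by (unfold k; apply (le_INR 1); lia).
  assert (He := exp_pos 1).
  assert (Hrho_r : rho ^ r <= (2 * exp 1 * C) ^ r * (C ^ j * f) * W ^ r).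
  { rewrite <- EPhi, <- !Rpow_mult_distr; apply pow_incr; lra. }
  assert (Hconst := pow_const_le C j r HC); fold k in Hconst.
  assert (0 < (2 * exp 1 * C) ^ r * (C ^ j * f)) by (apply Rmult_lt_0_compat; [|apply Rmult_lt_0_compat]; try apply pow_lt; nra).
  assert (0 < k ^ r * (f * Mj)) by (apply Rmult_lt_0_compat; [apply pow_lt|apply Rmult_lt_0_compat]; lra).
  assert (Hkey : L * rho ^ r <= (24 * C) ^ (j + r) * (k ^ r * (f * Mj))).
  { apply Rle_trans with ((2 * exp 1 * C) ^ r * (C ^ j * f) * (L * W ^ r)).
    { replace ((2 * exp 1 * C) ^ r * (C ^ j * f) * (L * W ^ r))
        with (L * ((2 * exp 1 * C) ^ r * (C ^ j * f) * W ^ r)) by ring.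
      apply Rmult_le_compat_l; lra. }
    apply Rle_trans with ((2 * exp 1 * C) ^ r * (C ^ j * f) * ((2 * k) ^ r * k * Mj)).
    { apply Rmult_le_compat_l; lra. }
    replace ((2 * exp 1 * C) ^ r * (C ^ j * f) * ((2 * k) ^ r * k * Mj))
      with ((4 * exp 1 * C) ^ r * C ^ j * k * (k ^ r * (f * Mj)))
      by (replace (4 * exp 1 * C) with (2 * exp 1 * C * 2) by ring; rewrite !Rpow_mult_distr; ring).
    apply Rmult_le_compat_r; lra. }
  assert (0 < rho ^ r) by (apply pow_lt, Hrho).
  apply (Rmult_le_reg_r (rho ^ r)); [assumption|].
  replace ((24 * C) ^ (j + r) * ((k / rho) ^ r * (f * Mj)) * rho ^ r)
    with ((24 * C) ^ (j + r) * (k ^ r * (f * Mj))) by (unfold Rdiv; rewrite (Rpow_mult_distr k), pow_inv; field; lra).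
  exact Hkey.
Qed.

Lemma sum_n_shift_le_sum1 F r P : (forall m, 0 <= F m) -> (1 <= r)%nat ->
  sum_n (fun q => F (r + q)%nat) P <= sum1 F (r + P).
Proof.
  intros HF Hr; induction P as [|P IH].
  - rewrite sum_O, Nat.add_0_r; destruct r as [|r]; [lia|]; cbn [sum1].
    assert (0 <= sum1 F r) by (apply sum1_nonneg; intros; apply HF); lra.
  - rewrite sum_Sn, Nat.add_succ_r; cbn [sum1]; unfold plus; simpl; lra.
Qed.

Definition replace_head (g : R) (r : nat) (a : nat -> R) (i : nat) : R :=
  if (i <=? r)%nat then g else a i.

Lemma prod1_replace_head g r a m : g ^ r = prod1 a r -> (r <= m)%nat ->
  prod1 (replace_head g r a) m = prod1 a m.
Proof.
  intros Hg Hrm; induction Hrm as [|m Hrm IH].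
  - rewrite <- Hg, <- prod1_const; apply prod1_ext; intros i Hi.
    unfold replace_head; rewrite (proj2 (Nat.leb_le i r)) by lia; reflexivity.
  - cbn [prod1]; rewrite IH; unfold replace_head.
    rewrite (proj2 (Nat.leb_gt (S m) r)) by lia; reflexivity.
Qed.

Lemma sum1_replace_head_le g r a P : (forall i, 0 <= a i) ->
  sum1 (replace_head g r a) (r + P) <= INR r * g + sum_n (fun q => a (r + q)%nat) P.
Proof.
  intros Ha; induction P as [|P IH].
  - rewrite Nat.add_0_r, sum_O, <- sum1_const.
    rewrite (sum1_ext _ (fun _ => g)); [specialize (Ha (r + 0)%nat); lra|].
    intros i Hi; unfold replace_head; rewrite (proj2 (Nat.leb_le i r)) by lia; reflexivity.
  - rewrite Nat.add_succ_r, sum_Sn; cbn [sum1]; unfold plus; simpl.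
    unfold replace_head at 2; rewrite (proj2 (Nat.leb_gt (S (r + P)) r)) by lia.
    rewrite <- Nat.add_succ_r; lra.
Qed.

Section Comparison.

Variables (mu nu : nat -> R) (C : R).
Hypotheses (Hmu : weight_seq mu) (Hnu : weight_seq nu).
Hypotheses (Hmu_nq : nonquasianalytic mu) (Hnu_nq : nonquasianalytic nu).
Hypotheses (HC : 1 <= C) (HMN : forall l, Mseq mu l <= C ^ l * Mseq nu l).

Lemma inv_nu_pow_le j r m Phi : 1 <= Phi -> Phi ^ r = C ^ j * (Mseq nu j / Mseq mu j) ->
  (r <= m)%nat -> (/ nu (j + m)%nat) ^ m <= (C * Phi) ^ m * (Mseq mu j / Mseq mu (j + m)).
Proof.
  intros HPhi EPhi Hrm.
  eapply Rle_trans; [apply inv_pow_le_Mseq_ratio, Hnu|].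
  assert (HMj := Mseq_pos mu Hmu j); assert (HNj := Mseq_pos nu Hnu j).
  assert (HMjm := Mseq_pos mu Hmu (j + m)); assert (HNjm := Mseq_pos nu Hnu (j + m)).
  assert (HCjm : 0 < C ^ (j + m)) by (apply pow_lt; lra).
  assert (HPhim : C ^ j * (Mseq nu j / Mseq mu j) <= Phi ^ m)
    by (rewrite <- EPhi; apply Rle_pow; [exact HPhi | exact Hrm]).
  rewrite Rpow_mult_distr.
  apply Rle_trans with (C ^ m * (C ^ j * (Mseq nu j / Mseq mu j)) * (Mseq mu j / Mseq mu (j + m))).
  2: { apply Rmult_le_compat_r; [apply Rdiv_le_0_compat; lra|].
       apply Rmult_le_compat_l; [apply pow_le; lra | exact HPhim]. }
  replace (C ^ m * (C ^ j * (Mseq nu j / Mseq mu j)) * (Mseq mu j / Mseq mu (j + m)))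
    with (Mseq nu j * (C ^ (j + m) / Mseq mu (j + m))) by (rewrite pow_add; field; lra).
  unfold Rdiv at 1; apply Rmult_le_compat_l; [lra|].
  rewrite <- (Rinv_div (Mseq mu (j + m))).
  apply Rinv_le_contravar; [apply Rdiv_lt_0_compat; lra|].
  apply Rle_div_l; [lra|]; rewrite Rmult_comm; apply HMN.
Qed.

Lemma scaled_inv_nu_pow_le j r m Phi g : 1 <= Phi -> Phi ^ r = C ^ j * (Mseq nu j / Mseq mu j) ->
  g ^ r = Mseq mu j / Mseq mu (j + r) -> (r <= m)%nat ->
  (/ nu (j + m)%nat / (C * Phi)) ^ m <= prod1 (replace_head g r (fun i => / mu (j + i)%nat)) m.
Proof.
  intros HPhi EPhi Eg Hrm.
  rewrite prod1_replace_head; [| rewrite <- Mseq_ratio by exact Hmu; exact Eg | exact Hrm].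
  rewrite <- Mseq_ratio by exact Hmu.
  unfold Rdiv at 1; rewrite (Rpow_mult_distr (/ nu (j + m)%nat)), (pow_inv (C * Phi)).
  apply Rle_div_l; [apply pow_lt; nra|]; rewrite Rmult_comm.
  apply inv_nu_pow_le with (r := r); assumption.
Qed.

(* Carleman's inequality applied to [1/mu_(j+1), 1/mu_(j+2), ...] with its first [r] terms
   replaced by their geometric mean [g]. *)
Lemma tail_nu_le j r Phi g : (1 <= r)%nat -> 1 <= Phi ->
  Phi ^ r = C ^ j * (Mseq nu j / Mseq mu j) ->
  0 < g -> g ^ r = Mseq mu j / Mseq mu (j + r) ->
  tail nu (j + r) <= 2 * exp 1 * C * Phi * (INR r * g + tail mu (j + r)).
Proof.
  intros Hr HPhi EPhi Hg Eg.
  set (a := fun i => / mu (j + i)%nat).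
  assert (Ha : forall i, 0 < a i) by (intros i; apply Rinv_0_lt_compat, weight_seq_pos, Hmu).
  set (c := replace_head g r a).
  assert (Hc : forall i, 0 < c i) by (intros i; unfold c, replace_head; destruct (i <=? r)%nat; auto).
  assert (HCPhi : 0 < C * Phi) by nra.
  set (x := fun m => if (r <=? m)%nat then / nu (j + m)%nat / (C * Phi) else 0).
  assert (Hx : forall m, 0 <= x m).
  { intros m; unfold x; destruct (r <=? m)%nat; [|lra].
    apply Rdiv_le_0_compat; [left; apply Rinv_0_lt_compat, weight_seq_pos, Hnu | exact HCPhi]. }
  assert (Hxc : forall m, (1 <= m)%nat -> x m ^ m <= prod1 c m).
  { intros m Hm; unfold x; destruct (Nat.leb_spec r m) as [Hrm|Hrm].
    - apply scaled_inv_nu_pow_le with (r := r); assumption.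
    - rewrite pow_i by lia; left; apply prod1_pos; intros; apply Hc. }
  apply Series_le_of_sum_n; [apply ex_series_tail, Hnu_nq; exact Hnu|]; intros P.
  assert (Hcarleman := carleman c x (r + P) (fun i _ => Hc i)
                         (fun m Hm => conj (Hx m) (Hxc m ltac:(lia)))).
  assert (Hhead := sum1_replace_head_le g r a P (fun i => Rlt_le _ _ (Ha i))); fold c in Hhead.
  assert (Htail := sum_n_le_tail mu Hmu Hmu_nq (j + r) P).
  rewrite (sum_n_ext _ (fun q => / mu (j + r + q)%nat)) in Hhead
    by (intros q; unfold a; rewrite Nat.add_assoc; reflexivity).
  assert (Hshift := sum_n_shift_le_sum1 (fun m => C * Phi * x m) r P
                      (fun m => Rmult_le_pos _ _ (Rlt_le _ _ HCPhi) (Hx m)) Hr).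
  rewrite sum1_scal in Hshift.
  assert (Ex : forall q, C * Phi * x (r + q)%nat = / nu (j + r + q)%nat).
  { intros q; unfold x; rewrite (proj2 (Nat.leb_le r (r + q))) by lia.
    assert (Hnu_pos := weight_seq_pos nu Hnu (j + r + q)).
    rewrite Nat.add_assoc; field; repeat split; lra. }
  rewrite (sum_n_ext _ _ P Ex) in Hshift.
  apply Rle_trans with (C * Phi * sum1 x (r + P)); [exact Hshift|].
  replace (2 * exp 1 * C * Phi * (INR r * g + tail mu (j + r)))
    with (C * Phi * (2 * exp 1 * (INR r * g + tail mu (j + r)))) by ring.
  apply Rmult_le_compat_l; [lra|].
  assert (He := exp_pos 1).
  eapply Rle_trans; [exact Hcarleman|]; apply Rmult_le_compat_l; lra.
Qed.

Lemma Lseq_le_pow_mul k : Lseq mu k <= (24 * C) ^ k * Lseq nu k.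
Proof.
  destruct k as [|n]; [simpl; lra|].
  destruct (Lseq_attained nu n) as [j [Hj ELnu]].
  assert (HLmu := Lseq_le mu n j Hj); assert (HLk := Lseq_le_mul_Mseq mu Hmu Hmu_nq n).
  assert (HLpos := Lseq_pos mu Hmu Hmu_nq (S n)).
  set (r := (S n - j)%nat) in *.
  assert (Hr : (1 <= r)%nat) by (unfold r; lia).
  replace (S n) with (j + r)%nat in * by (unfold r; lia).
  assert (HMj := Mseq_pos mu Hmu j); assert (HNj := Mseq_pos nu Hnu j).
  assert (HMk := Mseq_pos mu Hmu (j + r)).
  set (f := Mseq nu j / Mseq mu j).
  assert (Hf : 0 < f) by (apply Rdiv_lt_0_compat; assumption).
  assert (HCf : 1 <= C ^ j * f).
  { unfold f; assert (0 < C ^ j) by (apply pow_lt; lra); assert (Hj_le := HMN j).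
    replace (C ^ j * (Mseq nu j / Mseq mu j)) with (C ^ j * Mseq nu j / Mseq mu j) by (field; lra).
    apply Rle_div_r; lra. }
  set (Phi := Rpower (C ^ j * f) (/ INR r)).
  set (g := Rpower (Mseq mu j / Mseq mu (j + r)) (/ INR r)).
  assert (EPhi : Phi ^ r = C ^ j * f) by (apply root_pow; [lra | exact Hr]).
  assert (Eg : g ^ r = Mseq mu j / Mseq mu (j + r))
    by (apply root_pow; [apply Rdiv_lt_0_compat; assumption | exact Hr]).
  assert (HPhi : 1 <= Phi).
  { unfold Phi; rewrite <- (Rpower_O (C ^ j * f)) by lra.
    apply Rle_Rpower; [exact HCf | left; apply Rinv_0_lt_compat, lt_0_INR; lia]. }
  assert (Hg : 0 < g) by (unfold g, Rpower; apply exp_pos).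
  assert (Htail := tail_nu_le j r Phi g Hr HPhi EPhi Hg Eg).
  assert (HLW := mul_pow_add_le_of_two_bounds _ _ _ _ _ (j + r) r ltac:(lia) ltac:(lia)
                   (Rlt_le _ _ HLpos) (tail_pos mu Hmu Hmu_nq _) Hg HMj HMk HLmu HLk Eg).
  rewrite ELnu; replace (Mseq nu j) with (f * Mseq mu j) by (unfold f; field; lra).
  apply (le_of_mul_pow_bound _ _ (INR r * g + tail mu (j + r)) Phi); try assumption; try lra.
  - apply tail_pos; assumption.
  - assert (0 < tail mu (j + r)) by (apply tail_pos; assumption).
    assert (0 < INR r) by (apply lt_0_INR; lia); nra.
Qed.

End Comparison.

(** * Log-convex minorants *)

Lemma omega_ge_ln P t k : P 0%nat = 1 -> 0 < t ^ k -> 0 < P k ->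
  Rbar_le (ln (t ^ k / P k)) (omega P t).
Proof.
  intros HP0 Htk HPk; unfold omega; apply (Sup_seq_minor_le _ _ k); cbv zeta.
  rewrite HP0, Rmult_1_r.
  destruct (Rlt_dec 0 (t ^ k / P k)) as [_|Hneg]; [simpl; lra|].
  exfalso; apply Hneg, Rdiv_lt_0_compat; assumption.
Qed.

Lemma omega_nonneg P t : P 0%nat = 1 -> Rbar_le 0 (omega P t).
Proof.
  intros HP0.
  assert (H := omega_ge_ln P t 0 HP0 ltac:(simpl; lra) ltac:(rewrite HP0; lra)).
  rewrite HP0 in H; replace (t ^ 0 / 1) with 1 in H by (simpl; field).
  rewrite ln_1 in H; exact H.
Qed.

Lemma omega_le_scale P Q A t : P 0%nat = 1 -> Q 0%nat = 1 ->
  (forall k, 0 < P k) -> (forall k, 0 < Q k) -> 0 < A -> 0 <= t ->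
  (forall k, P k <= A ^ k * Q k) -> Rbar_le (omega Q t) (omega P (A * t)).
Proof.
  intros HP0 HQ0 HP HQ HA Ht HPQ; unfold omega; apply Sup_seq_le; intros k; cbv zeta.
  rewrite HP0, HQ0, !Rmult_1_r.
  assert (Hle : t ^ k / Q k <= (A * t) ^ k / P k).
  { specialize (HP k); specialize (HQ k); specialize (HPQ k).
    assert (0 <= t ^ k) by (apply pow_le, Ht); assert (0 < A ^ k) by (apply pow_lt, HA).
    rewrite Rpow_mult_distr; apply (proj1 (Rle_div_r _ _ _ HP)).
    replace (t ^ k / Q k * P k) with (t ^ k * (P k / Q k)) by (field; lra).
    rewrite Rmult_comm; apply Rmult_le_compat_r; [assumption|].
    apply Rle_div_l; [exact HQ | exact HPQ]. }
  destruct (Rlt_dec 0 (t ^ k / Q k)) as [HQt|]; [|exact I].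
  destruct (Rlt_dec 0 ((A * t) ^ k / P k)) as [HPt|]; [|lra].
  simpl; apply ln_le; assumption.
Qed.

Lemma exp_le_compat x y : x <= y -> exp x <= exp y.
Proof. intros [Hlt | ->]; [left; apply exp_increasing, Hlt | right; reflexivity]. Qed.

Lemma expneg_nonneg w : 0 <= expneg w.
Proof. destruct w; simpl; [left; apply exp_pos | lra | lra]. Qed.

Lemma expneg_le w1 w2 : Rbar_le 0 w1 -> Rbar_le w1 w2 -> expneg w2 <= expneg w1.
Proof.
  intros H1 H2; destruct w1 as [a| |], w2 as [b| |]; simpl in *; try tauto; try lra.
  - apply exp_le_compat; lra.
  - left; apply exp_pos.
Qed.

Lemma pow_mul_expneg_omega_le Q t k : Q 0%nat = 1 -> (forall k, 0 < Q k) -> 0 <= t ->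
  t ^ k * expneg (omega Q t) <= Q k.
Proof.
  intros HQ0 HQ Ht.
  destruct (Req_dec (t ^ k) 0) as [Ht0|Ht0]; [rewrite Ht0, Rmult_0_l; left; apply HQ|].
  assert (Htk : 0 < t ^ k) by (assert (0 <= t ^ k) by (apply pow_le, Ht); lra).
  assert (Ho := omega_ge_ln Q t k HQ0 Htk (HQ k)).
  destruct (omega Q t) as [w| |]; simpl in *; [|rewrite Rmult_0_r; left; apply HQ | contradiction].
  apply Rle_trans with (t ^ k * exp (- ln (t ^ k / Q k))).
  - apply Rmult_le_compat_l; [lra|]; apply exp_le_compat; lra.
  - rewrite exp_Ropp, exp_ln by (apply Rdiv_lt_0_compat; [exact Htk | apply HQ]).
    right; field; split; [apply Rgt_not_eq, HQ | lra].
Qed.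

Definition minorant_set (P : nat -> R) (k : nat) (x : R) : Prop :=
  exists t, 0 <= t /\ x = t ^ k * expneg (omega P t).

Lemma Lub_minorant_set Q k : Q 0%nat = 1 -> (forall k, 0 < Q k) ->
  exists l, Lub_Rbar (minorant_set Q k) = Finite l /\ 0 <= l /\
            (forall x, minorant_set Q k x -> x <= l).
Proof.
  intros HQ0 HQ; destruct (Lub_Rbar_correct (minorant_set Q k)) as [Hub Hleast].
  assert (Hin : minorant_set Q k (0 ^ k * expneg (omega Q 0))) by (exists 0; split; [lra | reflexivity]).
  assert (Hbound : is_ub_Rbar (minorant_set Q k) (Q k)).
  { intros x [t [Ht ->]]; apply pow_mul_expneg_omega_le; assumption. }
  assert (H0 : 0 <= 0 ^ k * expneg (omega Q 0)) by (apply Rmult_le_pos; [apply pow_le; lra | apply expneg_nonneg]).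
  assert (H1 := Hub _ Hin); assert (H2 := Hleast _ Hbound).
  destruct (Lub_Rbar (minorant_set Q k)) as [l| |]; simpl in *; try tauto.
  exists l; split; [reflexivity | split; [lra | exact Hub]].
Qed.

Lemma lc_minorant_nonneg Q k : Q 0%nat = 1 -> (forall k, 0 < Q k) -> 0 <= lc_minorant Q k.
Proof.
  intros HQ0 HQ; unfold lc_minorant; fold (minorant_set Q k).
  destruct (Lub_minorant_set Q k HQ0 HQ) as [l [-> [Hl _]]]; rewrite HQ0; simpl; lra.
Qed.

(* [omega_Q(t) <= omega_P(A t)], so every [s ^ k e^(-omega_P(s))], [s = A t], is at most
   [A ^ k] times the element [t ^ k e^(-omega_Q(t))] of the set for [Q]. *)
Lemma lc_minorant_le_pow_mul P Q A k : P 0%nat = 1 -> Q 0%nat = 1 ->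
  (forall k, 0 < P k) -> (forall k, 0 < Q k) -> 0 < A -> (forall k, P k <= A ^ k * Q k) ->
  lc_minorant P k <= A ^ k * lc_minorant Q k.
Proof.
  intros HP0 HQ0 HP HQ HA HPQ; unfold lc_minorant; rewrite HP0, HQ0, !Rmult_1_l.
  fold (minorant_set P k) (minorant_set Q k).
  destruct (Lub_minorant_set P k HP0 HP) as [lP [EP _]].
  destruct (Lub_minorant_set Q k HQ0 HQ) as [lQ [EQ [_ HubQ]]].
  rewrite EP, EQ; simpl.
  destruct (Lub_Rbar_correct (minorant_set P k)) as [_ Hleast]; rewrite EP in Hleast.
  apply (Hleast (Finite (A ^ k * lQ))); intros x [s [Hs ->]]; simpl.
  set (t := s / A); assert (Ht : 0 <= t) by (unfold t; apply Rdiv_le_0_compat; lra).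
  replace s with (A * t) by (unfold t; field; lra).
  rewrite Rpow_mult_distr, Rmult_assoc; apply Rmult_le_compat_l; [apply pow_le; lra|].
  eapply Rle_trans; [|apply HubQ; exists t; split; [exact Ht | reflexivity]].
  apply Rmult_le_compat_l; [apply pow_le, Ht|].
  apply expneg_le; [apply omega_nonneg, HQ0 | apply omega_le_scale; assumption].
Qed.

Theorem lemma4p4 (mu nu : nat -> R) :
  weight_seq mu -> weight_seq nu ->
  nonquasianalytic mu -> nonquasianalytic nu ->
  preceq (Mseq mu) (Mseq nu) ->
  preceq (Lseq mu) (Lseq nu) /\
  preceq (lc_minorant (Lseq mu)) (lc_minorant (Lseq nu)).
Proof.
  intros Hmu Hnu Hmu_nq Hnu_nq HMN.
  destruct (le_pow_of_preceq (Mseq mu) (Mseq nu) (Mseq_pos mu Hmu) (Mseq_pos nu Hnu))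
    as [C [HC HMNC]]; [rewrite !Mseq_0 by assumption; lra | exact HMN |].
  assert (HL := Lseq_le_pow_mul mu nu C Hmu Hnu Hmu_nq Hnu_nq HC HMNC).
  assert (HLmu := Lseq_pos mu Hmu Hmu_nq); assert (HLnu := Lseq_pos nu Hnu Hnu_nq).
  split; apply (preceq_of_le_pow _ _ (24 * C)); try lra; intros k _.
  - left; apply HLnu.
  - apply HL.
  - apply lc_minorant_nonneg; [reflexivity | exact HLnu].
  - apply lc_minorant_le_pow_mul; try reflexivity; try assumption; lra.
Qed.
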